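(* Fix real numbers $\rho,\sigma$ with $\rho,\sigma\neq 0$ and $\rho\neq\pm\sigma$. For $(x,y)\in\mathbb{R}^2$ let $\ell_a$ and $\ell_c$ be the lines through $(0,0)$ with slopes $\rho$ and $-\rho$, and let $\ell_b$ and $\ell_d$ be the lines through $(x,y)$ with slopes $\sigma$ and $-\sigma$. Let $P_1=\ell_d\cap\ell_a$, $P_2=\ell_a\cap\ell_b$, $P_3=\ell_b\cap\ell_c$, $P_4=\ell_c\cap\ell_d$ be the vertices of the (possibly nonconvex or degenerate) quadrilateral $P_1P_2P_3P_4$. Fix unit vectors $u_a,u_b,u_c,u_d$ parallel to $\ell_a,\ell_b,\ell_c,\ell_d$ respectively, and define the signed lengths $a=(P_2-P_1)\cdot u_a$, $b=(P_3-P_2)\cdot u_b$, $c=(P_4-P_3)\cdot u_c$, $d=(P_1-P_4)\cdot u_d$, and the signed area $A=\frac12\sum_{i=1}^{4}\det(P_i,P_{i+1})$ (indices mod $4$), where the unit vectors are chosen and the overall sign of the area is adjusted (by multiplying $A$ by a fixed $\pm1$) so that $a,b,c,d,A>0$ at some parameter $(x,y)$ for which $P_1P_2P_3P_4$ is convex (assume such a parameter exists). Set $B^2=(s-a)(s-b)(s-c)(s-d)$ with $s=\frac{a+b+c+d}{2}$. Then, as functions of $(x,y)$, there are constants $\lambda,\mu$ (depending on $\rho,\sigma$ and the sign choices) such that $$A(x,y)=\lambda\,xy,\qquad B^2(x,y)=\mu\,(xy)^2 .$$ Consequently $A^2/B^2$ is constant on the set of $(x,y)$ for which $P_1P_2P_3P_4$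 is a convex quadrilateral.
   Context: $\det(P,Q)$ denotes the $2\times2$ determinant of the column vectors $P,Q\in\mathbb{R}^2$. The signed area of a closed polygon is the sum of areas of the regions it bounds, weighted by winding number; for a quadrilateral it equals $\frac12\sum_i\det(P_i,P_{i+1})$ up to orientation sign. *)

From Stdlib Require Import Reals.
Open Scope R_scope.

Definition pt := (R * R)%type.
Definition det (p q : pt) : R := fst p * snd q - snd p * fst q.
Definition dot (p q : pt) : R := fst p * fst q + snd p * snd q.
Definition psub (p q : pt) : pt := (fst p - fst q, snd p - snd q).

Definition on_line (p : pt) (m : R) (q : pt) : Prop :=
  snd q - snd p = m * (fst q - fst p).

Definition unit_dir (m : R) (u : pt) : Prop :=
  fst u ^ 2 + snd u ^ 2 = 1 /\ snd u = m * fst u.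

Definition quad_area (P1 P2 P3 P4 : pt) : R :=
  / 2 * (det P1 P2 + det P2 P3 + det P3 P4 + det P4 P1).

Definition turn (p q r : pt) : R := det (psub q p) (psub r q).

Definition convex_quad (P1 P2 P3 P4 : pt) : Prop :=
  (0 < turn P4 P1 P2 /\ 0 < turn P1 P2 P3 /\ 0 < turn P2 P3 P4 /\ 0 < turn P3 P4 P1)
  \/
  (turn P4 P1 P2 < 0 /\ turn P1 P2 P3 < 0 /\ turn P2 P3 P4 < 0 /\ turn P3 P4 P1 < 0).

Definition Bsq (a b c d : R) : R :=
  let s := (a + b + c + d) / 2 in (s - a) * (s - b) * (s - c) * (s - d).

(* Every vertex lies on one of the two lines through the origin, so it is
   [(X, m X)] with an abscissa [X] that is linear in [(x, y)].  Hence each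
   signed side length is a constant times one of the linear forms
   [y -+ rho x], [y -+ sigma x], and the area, a quadratic form vanishing on
   the axes, is a constant times [x y].  In Brahmagupta's [B^2] the four
   factors [s - a, ..., s - d] collapse to two multiples of [x] and two of
   [y], provided the unit vectors on opposite sides are oriented oppositely;
   this orientation is forced by the positivity of [a b c d] at a convex
   configuration, where [(y^2 - rho^2 x^2) (y^2 - sigma^2 x^2) < 0]. *)
From Stdlib Require Import Reals Lra Psatz.
Open Scope R_scope.
Set Implicit Arguments.
Unset Strict Implicit.

Definition slope_pt (m X : R) : pt := (X, m * X).

Lemma line_intersectionE (m n x y : R) (P : pt) :
  m <> n -> on_line (0, 0) m P -> on_line (x, y) n P ->
  P = slope_pt m ((y - n * x) / (m - n)).
Proof.
  destruct P as [X Y]; unfold on_line, slope_pt; simpl.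
  intros Hmn HO Hxy.
  assert (HX : X = (y - n * x) / (m - n)).
  { field_simplify_eq; [nra | lra]. }
  rewrite <- HX; f_equal; lra.
Qed.

Lemma unit_dirE (m : R) (u : pt) : unit_dir m u -> u = (fst u, m * fst u).
Proof. destruct u as [u1 u2]; intros [_ Hu]; simpl in *; now rewrite Hu. Qed.

Lemma unit_dir_opp (m : R) (u v : pt) :
  unit_dir m u -> unit_dir (- m) v ->
  exists e, (e = 1 \/ e = -1) /\ v = (e * fst u, - m * (e * fst u)).
Proof.
  intros Hu Hv; rewrite (unit_dirE Hv).
  destruct u as [u1 u2], v as [v1 v2], Hu as [Nu Du], Hv as [Nv Dv]; simpl in *.
  subst u2 v2.
  assert (Hsq : (1 + m ^ 2) * ((v1 - u1) * (v1 + u1)) = 0) by nra.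
  assert (Hm : 1 + m ^ 2 <> 0) by nra.
  destruct (Rmult_integral _ _ Hsq) as [|Hv]; [contradiction|].
  destruct (Rmult_integral _ _ Hv).
  - exists 1; split; [now left|].
    replace v1 with u1 by lra; f_equal; ring.
  - exists (-1); split; [now right|].
    replace v1 with (- u1) by lra; f_equal; ring.
Qed.

Lemma turns_same_sign (P1 P2 P3 P4 : pt) :
  convex_quad P1 P2 P3 P4 -> 0 < turn P4 P1 P2 * turn P2 P3 P4.
Proof. intros [[? [? [? ?]]] | [? [? [? ?]]]]; nra. Qed.

Lemma cross_neg_neq0 (r s x y : R) :
  ((y - r * x) * (y + r * x)) * ((y - s * x) * (y + s * x)) < 0 -> x * y <> 0.
Proof.
  intros Hneg Hxy; destruct (Rmult_integral _ _ Hxy); subst; nra.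
Qed.

(* The product of the four sides is [e f (al be)^2 (u u') (v v')], which is
   positive only if [e f < 0]. *)
Lemma opposite_orientation (al be u u' v v' e f : R) :
  e = 1 \/ e = -1 -> f = 1 \/ f = -1 -> (u * u') * (v * v') < 0 ->
  0 < al * u -> 0 < - (be * v) -> 0 < - e * (al * u') -> 0 < f * (be * v') ->
  f = - e.
Proof.
  intros He Hf Hneg Ha Hb Hc Hd.
  pose proof (Rmult_lt_0_compat _ _
    (Rmult_lt_0_compat _ _ (Rmult_lt_0_compat _ _ Ha Hb) Hc) Hd) as Hprod.
  replace ((al * u) * - (be * v) * (- e * (al * u')) * (f * (be * v')))
    with (e * f * ((al * be) ^ 2 * ((u * u') * (v * v')))) in Hprod by ring.
  assert (Hsq : (al * be) ^ 2 * ((u * u') * (v * v')) <= 0).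
  { pose proof (pow2_ge_0 (al * be)); nra. }
  destruct He, Hf; subst; lra.
Qed.

Lemma Bsq_opposite_sides (al be r s x y e : R) : e = 1 \/ e = -1 ->
  Bsq (al * (y - r * x)) (- (be * (y - s * x)))
      (- e * (al * (y + r * x))) (- e * (be * (y + s * x))) =
  (be ^ 2 - al ^ 2) * (al ^ 2 * r ^ 2 - be ^ 2 * s ^ 2) * (x * y) ^ 2.
Proof. unfold Bsq; cbv zeta; intros [-> | ->]; field. Qed.

Lemma sq_ratio_const (lam mu z : R) : z <> 0 ->
  (lam * z) ^ 2 / (mu * z ^ 2) = lam ^ 2 / mu.
Proof.
  intros Hz; destruct (Req_dec mu 0) as [-> | Hmu].
  - unfold Rdiv; rewrite !Rmult_0_l, Rinv_0; ring.
  - field; split; [exact Hmu | exact Hz].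
Qed.

Section Quadrilateral.

Variables (rho sigma : R) (P1 P2 P3 P4 : R -> R -> pt).
Hypotheses (rho_neq_sigma : rho <> sigma) (rho_neq_opp : rho <> - sigma).
Hypothesis P1_def : forall x y, on_line (0, 0) rho (P1 x y) /\ on_line (x, y) (- sigma) (P1 x y).
Hypothesis P2_def : forall x y, on_line (0, 0) rho (P2 x y) /\ on_line (x, y) sigma (P2 x y).
Hypothesis P3_def : forall x y, on_line (0, 0) (- rho) (P3 x y) /\ on_line (x, y) sigma (P3 x y).
Hypothesis P4_def : forall x y, on_line (0, 0) (- rho) (P4 x y) /\ on_line (x, y) (- sigma) (P4 x y).

Lemma sq_diff_neq0 : rho ^ 2 - sigma ^ 2 <> 0.
Proof.
  replace (rho ^ 2 - sigma ^ 2) with ((rho - sigma) * (rho + sigma)) by ring.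
  apply Rmult_integral_contrapositive; split; lra.
Qed.

Lemma verticesE x y :
  P1 x y = slope_pt rho ((y - - sigma * x) / (rho - - sigma)) /\
  P2 x y = slope_pt rho ((y - sigma * x) / (rho - sigma)) /\
  P3 x y = slope_pt (- rho) ((y - sigma * x) / (- rho - sigma)) /\
  P4 x y = slope_pt (- rho) ((y - - sigma * x) / (- rho - - sigma)).
Proof.
  destruct (P1_def x y), (P2_def x y), (P3_def x y), (P4_def x y).
  repeat split; apply line_intersectionE; auto; lra.
Qed.

Ltac vertices x y :=
  destruct (verticesE x y) as (E1 & E2 & E3 & E4); rewrite ?E1, ?E2, ?E3, ?E4;
  unfold slope_pt, quad_area, turn, det, dot, psub; simpl;
  field; repeat split; solve [lra | intro; apply sq_diff_neq0; lra].

Lemma quad_areaE x y :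
  quad_area (P1 x y) (P2 x y) (P3 x y) (P4 x y) =
  -4 * rho * sigma / (rho ^ 2 - sigma ^ 2) * (x * y).
Proof. vertices x y. Qed.

Lemma turns_prodE x y :
  turn (P4 x y) (P1 x y) (P2 x y) * turn (P2 x y) (P3 x y) (P4 x y) =
  - (4 * (rho + sigma) * sigma * rho / (rho ^ 2 - sigma ^ 2) ^ 2) ^ 2 *
  (((y - rho * x) * (y + rho * x)) * ((y - sigma * x) * (y + sigma * x))).
Proof. vertices x y. Qed.

Lemma convex_quad_cross_neg x y :
  convex_quad (P1 x y) (P2 x y) (P3 x y) (P4 x y) ->
  ((y - rho * x) * (y + rho * x)) * ((y - sigma * x) * (y + sigma * x)) < 0.
Proof.
  intros Hc; pose proof (turns_same_sign Hc) as Hpos.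
  rewrite turns_prodE in Hpos.
  set (k := 4 * (rho + sigma) * sigma * rho / (rho ^ 2 - sigma ^ 2) ^ 2) in Hpos.
  pose proof (pow2_ge_0 k); nra.
Qed.

Definition coef_rho (t : R) := 2 * sigma * (1 + rho ^ 2) * t / (rho ^ 2 - sigma ^ 2).
Definition coef_sigma (t : R) := 2 * rho * (1 + sigma ^ 2) * t / (rho ^ 2 - sigma ^ 2).

Lemma sidesE (ta tb e f x y : R) :
  dot (psub (P2 x y) (P1 x y)) (ta, rho * ta) = coef_rho ta * (y - rho * x) /\
  dot (psub (P3 x y) (P2 x y)) (tb, sigma * tb) = - (coef_sigma tb * (y - sigma * x)) /\
  dot (psub (P4 x y) (P3 x y)) (e * ta, - rho * (e * ta)) =
    - e * (coef_rho ta * (y + rho * x)) /\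
  dot (psub (P1 x y) (P4 x y)) (f * tb, - sigma * (f * tb)) =
    f * (coef_sigma tb * (y + sigma * x)).
Proof. unfold coef_rho, coef_sigma; repeat split; vertices x y. Qed.

End Quadrilateral.

Theorem mainTheorem3 (rho sigma : R) (P1 P2 P3 P4 : R -> R -> pt)
  (ua ub uc ud : pt) (eps : R) :
  rho <> 0 -> sigma <> 0 -> rho <> sigma -> rho <> - sigma ->
  (* P1 = l_d ∩ l_a, P2 = l_a ∩ l_b, P3 = l_b ∩ l_c, P4 = l_c ∩ l_d *)
  (forall x y, on_line (0, 0) rho (P1 x y) /\ on_line (x, y) (- sigma) (P1 x y)) ->
  (forall x y, on_line (0, 0) rho (P2 x y) /\ on_line (x, y) sigma (P2 x y)) ->
  (forall x y, on_line (0, 0) (- rho) (P3 x y) /\ on_line (x, y) sigma (P3 x y)) ->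
  (forall x y, on_line (0, 0) (- rho) (P4 x y) /\ on_line (x, y) (- sigma) (P4 x y)) ->
  unit_dir rho ua -> unit_dir sigma ub -> unit_dir (- rho) uc -> unit_dir (- sigma) ud ->
  (eps = 1 \/ eps = -1) ->
  let a := fun x y => dot (psub (P2 x y) (P1 x y)) ua in
  let b := fun x y => dot (psub (P3 x y) (P2 x y)) ub in
  let c := fun x y => dot (psub (P4 x y) (P3 x y)) uc in
  let d := fun x y => dot (psub (P1 x y) (P4 x y)) ud in
  let A := fun x y => eps * quad_area (P1 x y) (P2 x y) (P3 x y) (P4 x y) in
  let B2 := fun x y => Bsq (a x y) (b x y) (c x y) (d x y) in
  (exists x0 y0, convex_quad (P1 x0 y0) (P2 x0 y0) (P3 x0 y0) (P4 x0 y0) /\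
     0 < a x0 y0 /\ 0 < b x0 y0 /\ 0 < c x0 y0 /\ 0 < d x0 y0 /\ 0 < A x0 y0) ->
  (exists lam mu : R, forall x y, A x y = lam * (x * y) /\ B2 x y = mu * (x * y) ^ 2) /\
  (exists k : R, forall x y, convex_quad (P1 x y) (P2 x y) (P3 x y) (P4 x y) ->
     (A x y) ^ 2 / B2 x y = k).
Proof.
  intros _ _ Hrs Hrs' H1 H2 H3 H4 Ua Ub Uc Ud _ a b c d A B2
    (x0 & y0 & Hc0 & ha & hb & hc & hd & _).
  destruct (unit_dir_opp Ua Uc) as (e & He & ->).
  destruct (unit_dir_opp Ub Ud) as (f & Hf & ->).
  destruct ua as [ta ua2], Ua as [_ Ua], ub as [tb ub2], Ub as [_ Ub].
  cbn [fst snd] in *; subst ua2 ub2.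
  set (al := coef_rho rho sigma ta); set (be := coef_sigma rho sigma tb).
  pose proof (sidesE Hrs Hrs' H1 H2 H3 H4 ta tb e f) as sides.
  assert (Hfe : f = - e).
  { destruct (sides x0 y0) as (Ea & Eb & Ec & Ed).
    unfold a, b, c, d in *; rewrite Ea in ha; rewrite Eb in hb;
      rewrite Ec in hc; rewrite Ed in hd.
    apply (opposite_orientation He Hf
             (convex_quad_cross_neg Hrs Hrs' H1 H2 H3 H4 Hc0) ha hb hc hd). }
  subst f.
  set (lam := eps * (-4 * rho * sigma / (rho ^ 2 - sigma ^ 2))).
  set (mu := (be ^ 2 - al ^ 2) * (al ^ 2 * rho ^ 2 - be ^ 2 * sigma ^ 2)).
  assert (Hlin : forall x y, A x y = lam * (x * y) /\ B2 x y = mu * (x * y) ^ 2).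
  { intros x y; destruct (sides x y) as (Ea & Eb & Ec & Ed); split.
    - unfold A, lam; rewrite (quad_areaE Hrs Hrs' H1 H2 H3 H4); ring.
    - unfold B2, a, b, c, d; rewrite Ea, Eb, Ec, Ed.
      exact (Bsq_opposite_sides al be rho sigma x y He). }
  split; [now exists lam, mu |].
  exists (lam ^ 2 / mu); intros x y Hc.
  destruct (Hlin x y) as [-> ->]; apply sq_ratio_const.
  exact (cross_neg_neq0 (convex_quad_cross_neg Hrs Hrs' H1 H2 H3 H4 Hc)).
Qed.
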